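(* Let $g:\{\pm1\}^{m_1}\times\{\pm1\}^{m_2}\to\{\pm1\}$ be a gadget with $\hat g(S,T)=0$ whenever $S=\emptyset$ or $T=\emptyset$. Then for all $k,d,n$, $$L_{1,k}(g,d,m_1,m_2,n)\le\Bigl(\sum_{S,T}|\hat g(S,T)|\Bigr)^{k}L_{1,k}(\mathrm{XOR},d,1,1,n)\le 2^{(m_1+m_2)k/2}L_{1,k}(\mathrm{XOR},d,1,1,n).$$
   Context: $\hat g(S,T)=\mathbb{E}[g(\mathbf{x},\mathbf{y})\prod_{j\in S}\mathbf{x}_j\prod_{j\in T}\mathbf{y}_j]$ for uniform $\mathbf{x}\in\{\pm1\}^{m_1},\mathbf{y}\in\{\pm1\}^{m_2}$, and the sum is over all $S\subseteq[m_1],T\subseteq[m_2]$. For a randomized two-party protocol $\mathcal{C}:(\{\pm1\}^{m_1})^n\times(\{\pm1\}^{m_2})^n\to[-1,1]$ (value = expected output over internal randomness; inputs are $n$ blocks $x_i\in\{\pm1\}^{m_1}$, $y_i\in\{\pm1\}^{m_2}$), its $g$-fiber is $\mathcal{C}_{\downarrow g}(z)=\mathbb{E}[\mathcal{C}(\mathbf{x},\mathbf{y})\mid g(\mathbf{x}_i,\mathbf{y}_i)=z_i\ \forall i]$ for uniform $\mathbf{x},\mathbf{y}$. For $f:\{\pm1\}^n\to\mathbb{R}$, $L_{1,k}(f)=\sum_{|I|=k}|\hat f(I)|$. $L_{1,k}(g,d,m_1,m_2,n)$ denotes the supremum of $L_{1,k}(\mathcal{C}_{\downarrow g})$ over all such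 randomized protocols with at most $d$ bits of communication. $\mathrm{XOR}:\{\pm1\}\times\{\pm1\}\to\{\pm1\}$ is the gadget $\mathrm{XOR}(a,b)=ab$ (so $m_1=m_2=1$). *)

From HB Require Import structures.
From mathcomp Require Import all_boot all_order all_algebra.
From mathcomp Require Import boolp classical_sets reals.
Set Implicit Arguments. Unset Strict Implicit. Unset Printing Implicit Defensive.
Import Order.TTheory GRing.Theory Num.Theory.
Local Open Scope ring_scope.

(* Boolean encoding of {+1,-1}: false <-> +1, true <-> -1. *)
Definition sgn {R : pzRingType} (b : bool) : R := if b then -1 else 1.

Notation Bm m := {ffun 'I_m -> bool}.

Definition gadget (m1 m2 : nat) := Bm m1 -> Bm m2 -> bool.

Definition gadget_coef (R : fieldType) m1 m2 (g : gadget m1 m2)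
  (S : {set 'I_m1}) (T : {set 'I_m2}) : R :=
  (2 ^+ (m1 + m2))^-1 *
  \sum_(x : Bm m1) \sum_(y : Bm m2)
     sgn (g x y) * (\prod_(j in S) sgn (x j)) * (\prod_(j in T) sgn (y j)).

Definition fcoef (R : fieldType) n (f : Bm n -> R) (I : {set 'I_n}) : R :=
  (2 ^+ n)^-1 * \sum_(z : Bm n) f z * \prod_(i in I) sgn (z i).

Definition L1k (R : numFieldType) n (f : Bm n -> R) (k : nat) : R :=
  \sum_(I : {set 'I_n} | #|I| == k) `|fcoef f I|.

Inductive proto (X Y : Type) : Type :=
  | PLeaf of bool
  | PAlice of (X -> bool) & proto X Y & proto X Y
  | PBob of (Y -> bool) & proto X Y & proto X Y.

Fixpoint peval X Y (p : proto X Y) (x : X) (y : Y) : bool :=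
  match p with
  | PLeaf b => b
  | PAlice a p0 p1 => if a x then peval p1 x y else peval p0 x y
  | PBob b p0 p1 => if b y then peval p1 x y else peval p0 x y
  end.

Fixpoint pcost X Y (p : proto X Y) : nat :=
  match p with
  | PLeaf _ => 0
  | PAlice _ p0 p1 => (maxn (pcost p0) (pcost p1)).+1
  | PBob _ p0 p1 => (maxn (pcost p0) (pcost p1)).+1
  end%N.

(* A randomized (public-coin) protocol: a finitely supported probability
   distribution over deterministic protocols, given as weighted list. *)
Definition rproto (R : Type) X Y := seq (R * proto X Y).

Definition rproto_valid (R : numDomainType) X Y (C : rproto R X Y) (d : nat) :=
  [/\ all (fun wp => 0 <= wp.1) C,
      \sum_(wp <- C) wp.1 = 1 &
      all (fun wp => pcost wp.2 <= d)%N C].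

Definition rval (R : pzRingType) X Y (C : rproto R X Y) (x : X) (y : Y) : R :=
  \sum_(wp <- C) wp.1 * sgn (peval wp.2 x y).

Notation Inp n m := {ffun 'I_n -> Bm m}.

Definition fiber (R : fieldType) m1 m2 n (g : gadget m1 m2)
  (C : Inp n m1 -> Inp n m2 -> R) (z : Bm n) : R :=
  let ev x y := [forall i, g (x i) (y i) == z i] in
  (\sum_(x : Inp n m1) \sum_(y : Inp n m2) if ev x y then C x y else 0) /
  (\sum_(x : Inp n m1) \sum_(y : Inp n m2) (ev x y)%:R).

Definition L1k_sup (R : realType) m1 m2 (g : gadget m1 m2) (d n k : nat) : R :=
  sup [set L1k (fiber g (rval C)) k
      | C in [set C : rproto R (Inp n m1) (Inp n m2) | rproto_valid C d]].

(* The XOR gadget on {±1} x {±1}: XOR(a,b) = ab. *)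
Definition XORg : gadget 1 1 := fun a b => a ord0 (+) b ord0.

(* The level-k coefficients of the g-fiber of a protocol C are averages of C against products
   over i in I of sgn g(x_i, y_i).  Expanding each factor in the Fourier basis of g turns such a
   product into a mixture, with probability weights |ĝ(S_i,T_i)| / L where L = Σ |ĝ|, of
   products of parities χ_{S_i}(x_i) χ_{T_i}(y_i), at the price of a factor L^k.  Since ĝ
   vanishes unless S_i and T_i are both nonempty, Alice and Bob can run C on XOR-inputs a, b by
   padding them with public random strings into uniform x, y with parity a_i on S_i and b_i on
   T_i; each mixture term is thus a level-k coefficient of the XOR-fiber of a protocol of the
   same cost.  Balancedness (ĝ(∅,∅) = 0) makes all fibers equally large.  Parseval and
   Cauchy-Schwarz give L^2 <= 2^(m1+m2). *)

From HB Require Import structures.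
From mathcomp Require Import all_boot all_order all_algebra.
From mathcomp Require Import boolp classical_sets reals.
From mathcomp Require Import ring.
Set Implicit Arguments. Unset Strict Implicit. Unset Printing Implicit Defensive.
Import Order.TTheory GRing.Theory Num.Theory.
Local Open Scope ring_scope.

Lemma sgnE (R : pzRingType) (b : bool) : sgn b = (-1) ^+ b :> R.
Proof. by case: b. Qed.

Lemma sgn_addb (R : pzRingType) (a b : bool) : sgn (a (+) b) = sgn a * sgn b :> R.
Proof. by rewrite !sgnE signr_addb. Qed.

Lemma sgn_mulss (R : pzRingType) (a : bool) : sgn a * sgn a = 1 :> R.
Proof. by rewrite sgnE -expr2 sqrr_sign. Qed.

Lemma normr_sgn (R : numDomainType) (a : bool) : `|sgn a : R| = 1.
Proof. by rewrite sgnE normr_sign. Qed.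

Definition walsh {R : pzRingType} m (S : {set 'I_m}) (x : Bm m) : R :=
  \prod_(j in S) sgn (x j).

Definition parity m (S : {set 'I_m}) (x : Bm m) : bool := \big[addb/false]_(j in S) x j.

Lemma walsh_parity (R : pzRingType) m (S : {set 'I_m}) (x : Bm m) :
  walsh S x = sgn (parity S x) :> R.
Proof. exact/esym/(big_morph _ (@sgn_addb R) (erefl (sgn false))). Qed.

Lemma sum_walsh_mul (R : comPzRingType) m (a b : Bm m) :
  \sum_(S : {set 'I_m}) walsh S a * walsh S b = 2 ^+ m * (a == b)%:R :> R.
Proof.
have -> : \sum_(S : {set 'I_m}) walsh S a * walsh S b =
          \prod_j (sgn (a j) * sgn (b j) + 1) :> R.
  by rewrite bigA_distr; apply: eq_bigr => S _; rewrite -big_split big_mkcond.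
have [<- | neq_ab] := eqVneq a b.
  rewrite mulr1 -[in RHS](card_ord m) -prodr_const.
  by apply: eq_bigr => j _; rewrite sgn_mulss.
have [j neq_j] : exists j, a j != b j.
  apply/existsP; rewrite -negb_forall; apply: contra neq_ab => /forallP eq_ab.
  by apply/eqP/ffunP => j; apply/eqP.
rewrite mulr0 (bigD1 j) //=.
by move: neq_j; case: (a j); case: (b j) => //= _; rewrite /sgn; ring.
Qed.

Lemma sum_sum1 (R : pzSemiRingType) (X Y : finType) :
  \sum_(x : X) \sum_(y : Y) (1 : R) = (#|X| * #|Y|)%:R.
Proof.
rewrite (eq_bigr (fun _ => #|Y|%:R)) => [|x _]; last by rewrite sumr_const.
by rewrite sumr_const -mulrnA mulnC.
Qed.

Lemma card_Bm m : #|{: Bm m}| = (2 ^ m)%N.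
Proof. by rewrite card_ffun card_bool card_ord. Qed.

Lemma card_Inp n m : #|{: Inp n m}| = (2 ^ (m * n))%N.
Proof. by rewrite card_ffun card_Bm card_ord expnM. Qed.

Definition coef_index m1 m2 := ({set 'I_m1} * {set 'I_m2})%type.

Definition walsh2 {R : pzRingType} m1 m2 (p : coef_index m1 m2) (a : Bm m1) (b : Bm m2) : R :=
  walsh p.1 a * walsh p.2 b.

Lemma sum_walsh2_mul (R : comPzRingType) m1 m2 (a x : Bm m1) (b y : Bm m2) :
  \sum_(p : coef_index m1 m2) walsh2 p x y * walsh2 p a b =
  2 ^+ (m1 + m2) * ((x == a)%:R * (y == b)%:R) :> R.
Proof.
rewrite exprD mulrACA -!sum_walsh_mul mulr_suml.
under [RHS]eq_bigr do rewrite mulr_sumr.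
by rewrite pair_bigA; apply: eq_bigr => p _; rewrite mulrACA.
Qed.

Lemma two_exp_neq0 (R : numDomainType) k : 2 ^+ k != 0 :> R.
Proof. by rewrite expf_neq0 // pnatr_eq0. Qed.

Lemma sum_delta (R : pzSemiRingType) (I : finType) (F : I -> R) (i : I) :
  \sum_j F j * (j == i)%:R = F i.
Proof. by under eq_bigr do rewrite mulr_natr mulrb; rewrite -big_mkcond big_pred1_eq. Qed.

Lemma sum1_Bm2 (R : pzSemiRingType) m1 m2 :
  \sum_(a : Bm m1) \sum_(b : Bm m2) 1 = 2 ^+ (m1 + m2) :> R.
Proof. by rewrite sum_sum1 !card_Bm -expnD natrX. Qed.

Lemma card_Inp2 n m1 m2 : #|{: Inp n m1 * Inp n m2}| = (2 ^ ((m1 + m2) * n))%N.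
Proof. by rewrite card_prod !card_Inp -expnD -mulnDl. Qed.

Lemma sum1_Inp2 (R : pzSemiRingType) n m1 m2 :
  \sum_(x : Inp n m1) \sum_(y : Inp n m2) 1 = 2 ^+ ((m1 + m2) * n) :> R.
Proof. by rewrite sum_sum1 -card_prod card_Inp2 natrX. Qed.

Lemma card_sets (T : finType) : #|{: {set T}}| = (2 ^ #|T|)%N.
Proof.
rewrite -cardsT -card_powerset; apply: eq_card => A.
by rewrite !inE finset.subsetT.
Qed.

Lemma sqr_sum_le_card_sum_sqr (R : realDomainType) (T : finType) (f : T -> R) :
  (\sum_t f t) ^+ 2 <= #|T|%:R * \sum_t f t ^+ 2.
Proof.
have row s : \sum_t (f s - f t) ^+ 2 =
    #|T|%:R * f s ^+ 2 - 2 * f s * \sum_t f t + \sum_t f t ^+ 2.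
  have -> : #|T|%:R * f s ^+ 2 = \sum_(t : T) f s ^+ 2 by rewrite sumr_const mulr_natl.
  rewrite mulr_sumr -sumrN -!big_split; apply: eq_bigr => t _ /=.
  by rewrite sqrrB -mulrA mulr_natl.
set A := \sum_t f t ^+ 2; set B := \sum_t f t; set N : R := #|T|%:R.
have total : \sum_s \sum_t (f s - f t) ^+ 2 = 2 * (N * A - B ^+ 2).
  under eq_bigr do rewrite row.
  rewrite !big_split /= sumrN -mulr_sumr.
  have -> : \sum_s 2 * f s * B = 2 * B * B by rewrite -mulr_suml -mulr_sumr.
  have -> : \sum_(s : T) A = N * A by rewrite sumr_const mulr_natl.
  by rewrite -/A -/N; ring.
have : 0 <= \sum_s \sum_t (f s - f t) ^+ 2.
  by apply: sumr_ge0 => s _; apply: sumr_ge0 => t _; exact: sqr_ge0.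
by rewrite total pmulr_rge0 // subr_ge0.
Qed.

Section GadgetSpectrum.
Variables (R : realFieldType) (m1 m2 : nat) (g : gadget m1 m2).

Definition gcoef (p : coef_index m1 m2) : R := gadget_coef R g p.1 p.2.

Lemma gcoefE p :
  gcoef p = 2 ^- (m1 + m2) * \sum_a \sum_b sgn (g a b) * walsh2 p a b.
Proof.
rewrite /gcoef /gadget_coef; congr (_ * _).
by apply: eq_bigr => a _; apply: eq_bigr => b _; rewrite mulrA.
Qed.

Lemma gadget_inversion a b : sgn (g a b) = \sum_p gcoef p * walsh2 p a b.
Proof.
have -> : \sum_p gcoef p * walsh2 p a b = 2 ^- (m1 + m2) *
    \sum_x \sum_y sgn (g x y) * \sum_p walsh2 p x y * walsh2 p a b.
  under eq_bigr do rewrite gcoefE -mulrA mulr_suml.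
  rewrite -mulr_sumr exchange_big; congr (_ * _); apply: eq_bigr => x _.
  under eq_bigr do rewrite mulr_suml.
  rewrite exchange_big; apply: eq_bigr => y _.
  by rewrite mulr_sumr; apply: eq_bigr => p _; rewrite mulrA.
rewrite (eq_bigr (fun x => 2 ^+ (m1 + m2) *
    ((\sum_y sgn (g x y) * (y == b)%:R) * (x == a)%:R))) => [|x _]; last first.
  by rewrite mulr_suml mulr_sumr; apply: eq_bigr => y _; rewrite sum_walsh2_mul; ring.
by rewrite -mulr_sumr !sum_delta mulKf ?two_exp_neq0.
Qed.

Lemma gadget_parseval : \sum_p gcoef p ^+ 2 = 1.
Proof.
have -> : \sum_p gcoef p ^+ 2 = 2 ^- (m1 + m2) *
    \sum_x \sum_y sgn (g x y) * \sum_p gcoef p * walsh2 p x y.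
  under eq_bigr do rewrite expr2 {2}gcoefE mulrCA.
  rewrite -mulr_sumr; congr (_ * _).
  under eq_bigr do rewrite mulr_sumr.
  rewrite exchange_big; apply: eq_bigr => x _.
  under eq_bigr do rewrite mulr_sumr.
  rewrite exchange_big; apply: eq_bigr => y _.
  by rewrite mulr_sumr; apply: eq_bigr => p _; rewrite mulrCA.
under eq_bigr do under eq_bigr do rewrite -gadget_inversion sgn_mulss.
by rewrite sum1_Bm2 mulVf ?two_exp_neq0.
Qed.

Definition gadget_L1 : R := \sum_p `|gcoef p|.

Lemma gadget_L1_gt0 : 0 < gadget_L1.
Proof.
rewrite lt_def sumr_ge0 ?andbT => [|p _]; last exact: normr_ge0.
apply/negP => /eqP L1_0.
have gcoef0 p : gcoef p = 0.
  exact/normr0_eq0/(psumr_eq0P (fun q _ => normr_ge0 (gcoef q)) L1_0).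
have := gadget_inversion [ffun => false] [ffun => false].
rewrite big1 => [|p _]; last by rewrite gcoef0 mul0r.
by apply/eqP; rewrite /sgn; case: ifP; rewrite ?oppr_eq0 oner_eq0.
Qed.

Lemma gadget_L1_ge0 : 0 <= gadget_L1.
Proof. exact: ltW gadget_L1_gt0. Qed.

Lemma sqr_gadget_L1_le : gadget_L1 ^+ 2 <= 2 ^+ (m1 + m2).
Proof.
apply: le_trans (sqr_sum_le_card_sum_sqr _) _.
under eq_bigr do rewrite real_normK ?num_real //.
by rewrite gadget_parseval mulr1 card_prod !card_sets !card_ord -expnD natrX.
Qed.

End GadgetSpectrum.

Lemma gadget_L1_le_sqrt2 (R : rcfType) m1 m2 (g : gadget m1 m2) :
  gadget_L1 R g <= Num.sqrt 2 ^+ (m1 + m2).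
Proof.
rewrite -ler_sqr ?nnegrE ?exprn_ge0 ?sqrtr_ge0 ?gadget_L1_ge0 //.
by rewrite -exprM mulnC exprM sqr_sqrtr ?ler0n // sqr_gadget_L1_le.
Qed.

Definition gadgetn n m1 m2 (g : gadget m1 m2) (x : Inp n m1) (y : Inp n m2) : Bm n :=
  [ffun i => g (x i) (y i)].

Lemma fiber_eventE n m1 m2 (g : gadget m1 m2) (x : Inp n m1) (y : Inp n m2) (z : Bm n) :
  [forall i, g (x i) (y i) == z i] = (z == gadgetn g x y).
Proof.
apply/forallP/eqP => [eq_z | -> i]; last by rewrite ffunE.
by apply/ffunP => i; rewrite ffunE (eqP (eq_z i)).
Qed.

Lemma natr_forall (R : comPzSemiRingType) (I : finType) (b : pred I) :
  [forall i, b i]%:R = \prod_i (b i)%:R :> R.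
Proof.
have [/forallP all_b | /forallPn [i not_bi]] := boolP [forall i, b i].
  by rewrite big1 // => i _; rewrite all_b.
by rewrite (bigD1 i) //= (negbTE not_bi) mul0r.
Qed.

Section Fiber.
Variable R : numFieldType.

Definition balanced m1 m2 (g : gadget m1 m2) : Prop :=
  \sum_a \sum_b sgn (g a b) = 0 :> R.

Lemma balanced_coef0 m1 m2 (g : gadget m1 m2) :
  gadget_coef R g finset.set0 finset.set0 = 0 -> balanced g.
Proof.
rewrite /balanced /gadget_coef => /eqP; rewrite mulf_eq0 invr_eq0 (negbTE (two_exp_neq0 _ _)) /=.
move=> /eqP sum0; rewrite -[RHS]sum0; apply: eq_bigr => a _; apply: eq_bigr => b _.
by rewrite !big_set0 !mulr1.
Qed.

Lemma balanced_XOR : balanced XORg.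
Proof.
have sum_sgn0 : \sum_(a : Bm 1) sgn (a ord0) = 0 :> R.
  set X := LHS; have negK : involutive (fun a : Bm 1 => [ffun j => ~~ a j]).
    by move=> a; apply/ffunP => j; rewrite !ffunE negbK.
  have X_opp : X = - X.
    rewrite {1}/X (reindex_inj (can_inj negK)) /= -sumrN.
    by apply: eq_bigr => a _; rewrite ffunE; case: (a ord0); rewrite /sgn ?opprK.
  have : X *+ 2 = 0 by rewrite mulr2n {1}X_opp addNr.
  by move/eqP; rewrite mulrn_eq0 => /eqP.
rewrite /balanced /XORg.
under eq_bigr do under eq_bigr do rewrite sgn_addb.
by rewrite -big_distrlr /= sum_sgn0 mul0r.
Qed.

Section BalancedGadget.
Variables (m1 m2 : nat) (g : gadget m1 m2).
Hypothesis bal_g : balanced g.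

Lemma balanced_preimage (c : bool) :
  \sum_a \sum_b (g a b == c)%:R = 2 ^+ (m1 + m2) / 2 :> R.
Proof.
have indicator a b : (g a b == c)%:R = (1 + sgn c * sgn (g a b)) / 2 :> R.
  by case: c; case: (g a b); rewrite /sgn /=; field.
under eq_bigr do under eq_bigr do rewrite indicator.
under eq_bigr do rewrite -mulr_suml.
rewrite -mulr_suml; congr (_ / 2).
under eq_bigr do rewrite big_split -mulr_sumr /=.
by rewrite big_split -mulr_sumr /= bal_g mulr0 addr0 sum1_Bm2.
Qed.

Lemma fiber_event_count n (z : Bm n) :
  \sum_(x : Inp n m1) \sum_(y : Inp n m2) (z == gadgetn g x y)%:R = (2 ^+ (m1 + m2) / 2) ^+ n :> R.
Proof.
under eq_bigr do under eq_bigr do rewrite -fiber_eventE natr_forall.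
under eq_bigr do rewrite -(bigA_distr_bigA (fun i b => (g _ b == z i)%:R)).
rewrite -(bigA_distr_bigA (fun i a => \sum_b (g a b == z i)%:R)) /=.
by under eq_bigr do rewrite balanced_preimage; rewrite prodr_const card_ord.
Qed.

Lemma fiberE n (F : Inp n m1 -> Inp n m2 -> R) (z : Bm n) :
  fiber g F z = ((2 ^+ (m1 + m2) / 2) ^+ n)^-1 *
    \sum_x \sum_y F x y * (z == gadgetn g x y)%:R.
Proof.
rewrite /fiber /= -(fiber_event_count z) mulrC; congr (_ * _).
  by congr (_^-1); apply: eq_bigr => x _; apply: eq_bigr => y _; rewrite fiber_eventE.
apply: eq_bigr => x _; apply: eq_bigr => y _.
by rewrite fiber_eventE mulr_natr mulrb.
Qed.

Lemma fcoef_fiber n (F : Inp n m1 -> Inp n m2 -> R) (I : {set 'I_n}) :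
  fcoef (fiber g F) I = 2 ^- ((m1 + m2) * n) *
    \sum_x \sum_y F x y * \prod_(i in I) sgn (g (x i) (y i)).
Proof.
rewrite /fcoef; under eq_bigr do rewrite fiberE -mulrA.
have two_h : 2 * (2 ^+ (m1 + m2) / 2) = 2 ^+ (m1 + m2) :> R.
  by rewrite mulrC divfK ?pnatr_eq0.
rewrite -mulr_sumr mulrA -invfM -exprMn two_h -exprM.
congr (_ * _); under eq_bigr do rewrite mulr_suml.
rewrite exchange_big; apply: eq_bigr => x _.
under eq_bigr do rewrite mulr_suml.
rewrite exchange_big; apply: eq_bigr => y _.
rewrite (eq_bigr (fun z : Bm n => F x y * ((\prod_(i in I) sgn (z i)) * (z == gadgetn g x y)%:R)));
  last by move=> z _; rewrite mulrAC mulrA.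
by rewrite -mulr_sumr sum_delta; congr (_ * _); apply: eq_bigr => i _; rewrite ffunE.
Qed.

Lemma normr_fcoef_fiber_le1 n (F : Inp n m1 -> Inp n m2 -> R) (I : {set 'I_n}) :
  (forall x y, `|F x y| <= 1) -> `|fcoef (fiber g F) I| <= 1.
Proof.
move=> F_le1; rewrite fcoef_fiber normrM ger0_norm ?invr_ge0 ?exprn_ge0 //.
rewrite ler_pdivrMl ?exprn_gt0 // mulr1 -sum1_Inp2.
apply: le_trans (ler_norm_sum _ _ _) _; apply: ler_sum => x _.
apply: le_trans (ler_norm_sum _ _ _) _; apply: ler_sum => y _.
rewrite normrM normr_prod big1 ?mulr1 ?F_le1 // => i _; exact: normr_sgn.
Qed.

End BalancedGadget.
End Fiber.

Lemma parity_flip m (S : {set 'I_m}) (x : Bm m) (t : bool) j0 : j0 \in S ->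
  parity S [ffun j => x j (+) (t && (j == j0))] = parity S x (+) t.
Proof.
move=> S_j0; rewrite /parity; under eq_bigr do rewrite ffunE.
rewrite big_split /=; congr (_ (+) _).
rewrite (bigD1 j0) //= eqxx andbT big1 ?addbF // => j /andP [_ /negbTE ->].
by rewrite andbF.
Qed.

Section Encoding.
Variables (n m : nat) (S : 'I_n -> {set 'I_m}).

Definition pivot i := [pick j in S i].

Definition flip_pivots (r : Inp n m) (e : Inp n 1) : Inp n m :=
  [ffun i => [ffun j => r i j (+) (e i ord0 && (Some j == pivot i))]].

Definition parity_shift (r : Inp n m) (a : Inp n 1) : Inp n 1 :=
  [ffun i => [ffun u => a i u (+) parity (S i) (r i)]].

(* In each block with [S i] nonempty, [encode r a] is [r] with the pivot bit flipped
   exactly when needed to give parity [a i] on [S i]; uniform [r] and [a] make it uniform. *)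
Definition encode (r : Inp n m) (a : Inp n 1) : Inp n m :=
  flip_pivots r (parity_shift r a).

Lemma parity_shiftK r : involutive (parity_shift r).
Proof. by move=> a; apply/ffunP => i; apply/ffunP => u; rewrite !ffunE addbK. Qed.

Lemma flip_pivotsK e : involutive (flip_pivots^~ e).
Proof. by move=> r; apply/ffunP => i; apply/ffunP => j; rewrite !ffunE addbK. Qed.

Lemma sum_encode (V : nmodType) (H : Inp n m -> V) :
  \sum_r \sum_a H (encode r a) = (\sum_x H x) *+ 2 ^ n.
Proof.
have shift r : \sum_a H (encode r a) = \sum_e H (flip_pivots r e).
  by rewrite [RHS](reindex_inj (can_inj (parity_shiftK r))).
have flip e : \sum_r H (flip_pivots r e) = \sum_x H x.
  by rewrite [RHS](reindex_inj (can_inj (flip_pivotsK e))).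
under eq_bigr do rewrite shift.
rewrite exchange_big; under eq_bigr do rewrite flip.
by rewrite sumr_const card_Inp mul1n.
Qed.

Lemma parity_encode r a i : S i != finset.set0 -> parity (S i) (encode r a i) = a i ord0.
Proof.
case/set0Pn => j1 S_j1.
have [j0 S_j0 pivot_j0] : exists2 j0, j0 \in S i & pivot i = Some j0.
  by rewrite /pivot; case: pickP => [j0 ? | /(_ j1)]; [exists j0 | rewrite S_j1].
have -> : encode r a i = [ffun j => r i j (+) (parity_shift r a i ord0 && (j == j0))].
  by apply/ffunP => j; rewrite !ffunE pivot_j0.
by rewrite parity_flip // !ffunE addbC addbK.
Qed.

End Encoding.

Lemma sum_encode2 n m1 m2 (S1 : 'I_n -> {set 'I_m1}) (S2 : 'I_n -> {set 'I_m2})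
    (V : nmodType) (K : Inp n m1 -> Inp n m2 -> V) :
  \sum_a \sum_b \sum_r \sum_t K (encode S1 r a) (encode S2 t b) =
  (\sum_x \sum_y K x y) *+ (2 ^ n * 2 ^ n).
Proof.
under eq_bigr do rewrite exchange_big /=.
under eq_bigr do under eq_bigr do rewrite exchange_big /=.
rewrite exchange_big /=.
under eq_bigr do under eq_bigr do rewrite (sum_encode S2).
by rewrite (sum_encode S1 (fun x => (\sum_y K x y) *+ 2 ^ n)) sumrMnl -mulrnA.
Qed.

Fixpoint proto_map X Y X' Y' (fA : X' -> X) (fB : Y' -> Y) (p : proto X Y) : proto X' Y' :=
  match p with
  | PLeaf b => PLeaf _ _ b
  | PAlice a p0 p1 => PAlice (a \o fA) (proto_map fA fB p0) (proto_map fA fB p1)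
  | PBob b p0 p1 => PBob (b \o fB) (proto_map fA fB p0) (proto_map fA fB p1)
  end.

Lemma peval_map X Y X' Y' (fA : X' -> X) (fB : Y' -> Y) p x y :
  peval (proto_map fA fB p) x y = peval p (fA x) (fB y).
Proof. by elim: p => //= [a p0 IH0 p1 IH1 | b p0 IH0 p1 IH1]; rewrite IH0 IH1. Qed.

Lemma pcost_map X Y X' Y' (fA : X' -> X) (fB : Y' -> Y) p :
  pcost (proto_map fA fB p) = pcost p.
Proof. by elim: p => //= [a p0 IH0 p1 IH1 | b p0 IH0 p1 IH1]; rewrite IH0 IH1. Qed.

Lemma all_allpairs (S : Type) (T : S -> Type) (U : Type) (p : pred U)
    (f : forall x, T x -> U) (s : seq S) (t : forall x, seq (T x)) :
  all p [seq f x y | x <- s, y <- t x] = all (fun x => all (fun y => p (f x y)) (t x)) s.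
Proof. by elim: s => //= x s IH; rewrite all_cat all_map IH. Qed.

Definition two_sided m1 m2 (p : coef_index m1 m2) :=
  (p.1 != finset.set0) && (p.2 != finset.set0).

Definition block_walsh {R : pzRingType} n m1 m2 (c : 'I_n -> coef_index m1 m2)
    (I : {set 'I_n}) (x : Inp n m1) (y : Inp n m2) : R :=
  \prod_(i in I) walsh2 (c i) (x i) (y i).

Definition block_coef {R : fieldType} n m1 m2 (F : Inp n m1 -> Inp n m2 -> R)
    (c : 'I_n -> coef_index m1 m2) (I : {set 'I_n}) : R :=
  2 ^- ((m1 + m2) * n) * \sum_x \sum_y F x y * block_walsh c I x y.

Section Simulation.
Variables (R : numFieldType) (n m1 m2 : nat) (c : 'I_n -> coef_index m1 m2).

Local Notation encodeA := (encode (fun i => (c i).1)).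
Local Notation encodeB := (encode (fun i => (c i).2)).
Local Notation npads := (#|{: Inp n m1 * Inp n m2}|%:R : R).

Definition sim_rproto (C : rproto R (Inp n m1) (Inp n m2)) : rproto R (Inp n 1) (Inp n 1) :=
  [seq (wp.1 / npads, proto_map (encodeA rt.1) (encodeB rt.2) wp.2)
  | wp <- C, rt <- enum {: Inp n m1 * Inp n m2}].

Lemma sim_rproto_valid C d : rproto_valid C d -> rproto_valid (sim_rproto C) d.
Proof.
case=> w_ge0 w_sum1 cost_le; split; rewrite ?all_allpairs.
- apply: sub_all w_ge0 => wp /= wp_ge0; apply/allP => rt _ /=.
  by rewrite divr_ge0.
- rewrite big_allpairs_dep -[RHS]w_sum1; apply: eq_bigr => wp _.
  by rewrite big_enum sumr_const -[_ *+ _]mulr_natr divfK // card_Inp2 pnatr_eq0 expn_eq0.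
- apply: sub_all cost_le => wp /= wp_le; apply/allP => rt _ /=.
  by rewrite pcost_map.
Qed.

Lemma rval_sim C a b : rval (sim_rproto C) a b =
  npads^-1 * \sum_r \sum_t rval C (encodeA r a) (encodeB t b).
Proof.
rewrite /rval /sim_rproto big_allpairs_dep pair_bigA /= exchange_big big_enum /=.
rewrite mulr_sumr; apply: eq_big => [rt | rt _]; first by rewrite inE.
by rewrite mulr_sumr; apply: eq_bigr => wp _; rewrite peval_map mulrAC mulrC.
Qed.

Lemma block_walsh_encode (I : {set 'I_n}) r t (a b : Inp n 1) : (forall i, two_sided (c i)) ->
  \prod_(i in I) sgn (XORg (a i) (b i)) = block_walsh c I (encodeA r a) (encodeB t b) :> R.
Proof.
move=> two_c; apply: eq_bigr => i _; have /andP [ne1 ne2] := two_c i.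
by rewrite /XORg sgn_addb /walsh2 !walsh_parity !parity_encode.
Qed.

Lemma fcoef_fiber_XOR_sim C I : (forall i, two_sided (c i)) ->
  fcoef (fiber XORg (rval (sim_rproto C))) I = block_coef (rval C) c I.
Proof.
move=> two_c; rewrite fcoef_fiber; last exact: balanced_XOR.
have term a b : rval (sim_rproto C) a b * \prod_(i in I) sgn (XORg (a i) (b i)) =
    npads^-1 * \sum_r \sum_t
      rval C (encodeA r a) (encodeB t b) * block_walsh c I (encodeA r a) (encodeB t b).
  rewrite rval_sim -mulrA; congr (_ * _); rewrite mulr_suml; apply: eq_bigr => r _.
  by rewrite mulr_suml; apply: eq_bigr => t _; rewrite (block_walsh_encode _ r t).
under eq_bigr do under eq_bigr do rewrite term.
under eq_bigr do rewrite -mulr_sumr.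
rewrite -mulr_sumr (sum_encode2 _ _ (fun x y => rval C x y * block_walsh c I x y)).
rewrite /block_coef card_Inp2 natrX -[_ *+ (_ * _)]mulr_natr natrM !natrX.
have -> : (2 : R) ^+ ((1 + 1) * n) = 2 ^+ n * 2 ^+ n by rewrite mulnDl mul1n exprD.
by rewrite mulrCA; congr (_ * _); rewrite mulrC mulfK // mulf_neq0 ?two_exp_neq0.
Qed.

End Simulation.

Section Mixture.
Variables (R : realFieldType) (m1 m2 : nat) (g : gadget m1 m2) (n : nat).

Local Notation L := (gadget_L1 R g).

Definition gweight (p : coef_index m1 m2) : R := `|gcoef R g p| / L.

Definition cweight (c : {ffun 'I_n -> coef_index m1 m2}) : R := \prod_i gweight (c i).

(* Outside [I] the factors [gweight] sum to 1, so every [I] is expanded over the same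
   index set, and [`|mixture_coef I c|] factors as [L ^+ #|I| * cweight c]. *)
Definition mixture_coef (I : {set 'I_n}) (c : {ffun 'I_n -> coef_index m1 m2}) : R :=
  \prod_i (if i \in I then gcoef R g (c i) else gweight (c i)).

Lemma gweight_ge0 p : 0 <= gweight p.
Proof. by rewrite divr_ge0 ?gadget_L1_ge0. Qed.

Lemma sum_gweight : \sum_p gweight p = 1.
Proof. by rewrite -mulr_suml mulfV // gt_eqF // gadget_L1_gt0. Qed.

Lemma normr_gcoef p : `|gcoef R g p| = L * gweight p.
Proof. by rewrite mulrCA mulfV ?mulr1 // gt_eqF // gadget_L1_gt0. Qed.

Lemma cweight_ge0 c : 0 <= cweight c.
Proof. by apply: prodr_ge0 => i _; exact: gweight_ge0. Qed.

Lemma sum_cweight : \sum_c cweight c = 1.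
Proof. by rewrite -(bigA_distr_bigA (fun _ p => gweight p)) /= sum_gweight prodr_const expr1n. Qed.

Lemma normr_mixture_coef (I : {set 'I_n}) c : `|mixture_coef I c| = L ^+ #|I| * cweight c.
Proof.
rewrite normr_prod (eq_bigr (fun i => (if i \in I then L else 1) * gweight (c i))) => [|i _].
  by rewrite big_split /= -big_mkcond prodr_const.
by case: (i \in I); rewrite ?normr_gcoef // mul1r ger0_norm ?gweight_ge0.
Qed.

Lemma prod_sgn_gadget_mixture (I : {set 'I_n}) (x : Inp n m1) (y : Inp n m2) :
  \prod_(i in I) sgn (g (x i) (y i)) = \sum_c mixture_coef I c * block_walsh c I x y.
Proof.
have expand i : (if i \in I then sgn (g (x i) (y i)) else 1) =
    \sum_p (if i \in I then gcoef R g p * walsh2 p (x i) (y i) else gweight p).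
  by case: (i \in I); rewrite ?gadget_inversion ?sum_gweight.
rewrite big_mkcond; under eq_bigr do rewrite expand.
rewrite bigA_distr_bigA /=; apply: eq_bigr => c _.
have -> : block_walsh c I x y = \prod_i (if i \in I then walsh2 (c i) (x i) (y i) else 1) :> R.
  by rewrite /block_walsh big_mkcond.
rewrite /mixture_coef -big_split; apply: eq_bigr => i _ /=.
by case: (i \in I); rewrite ?mulr1.
Qed.

Lemma fcoef_fiber_mixture (F : Inp n m1 -> Inp n m2 -> R) (I : {set 'I_n}) : balanced R g ->
  fcoef (fiber g F) I = \sum_c mixture_coef I c * block_coef F c I.
Proof.
move=> bal_g; rewrite fcoef_fiber //.
under eq_bigr do under eq_bigr do rewrite prod_sgn_gadget_mixture mulr_sumr.
under eq_bigr do rewrite exchange_big.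
rewrite exchange_big mulr_sumr; apply: eq_bigr => c _.
rewrite /block_coef [RHS]mulrCA; congr (_ * _).
rewrite mulr_sumr; apply: eq_bigr => x _.
by rewrite mulr_sumr; apply: eq_bigr => y _; rewrite mulrCA.
Qed.

Lemma cweight_eq0 (c : {ffun 'I_n -> coef_index m1 m2}) i :
  (forall S T, (S == finset.set0) || (T == finset.set0) -> gadget_coef R g S T = 0) ->
  ~~ two_sided (c i) -> cweight c = 0.
Proof.
move=> coef0 one_sided; rewrite /cweight (bigD1 i) //= /gweight /gcoef coef0 ?normr0 ?mul0r //.
by move: one_sided; rewrite negb_and !negbK.
Qed.

End Mixture.

Section Supremum.
Variable R : realType.

Lemma normr_rval_le X Y (C : rproto R X Y) x y :
  all (fun wp => 0 <= wp.1) C -> `|rval C x y| <= \sum_(wp <- C) wp.1.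
Proof.
elim: C => [|wp C IH] /=; first by rewrite /rval !big_nil normr0.
case/andP=> w_ge0 C_ge0; rewrite /rval !big_cons.
apply: le_trans (ler_normD _ _) _; apply: lerD; last exact: IH.
by rewrite normrM normr_sgn mulr1 ger0_norm.
Qed.

Definition leaf_rproto X Y : rproto R X Y := [:: (1, PLeaf X Y false)].

Lemma leaf_rproto_valid X Y d : rproto_valid (leaf_rproto X Y) d.
Proof. by split; rewrite /= ?big_seq1 // ler01. Qed.

Lemma has_sup_L1k_XOR d n k : has_sup [set L1k (fiber XORg (rval C)) k
    | C in [set C : rproto R (Inp n 1) (Inp n 1) | rproto_valid C d]].
Proof.
split; first by exists (L1k (fiber XORg (rval (leaf_rproto (Inp n 1) (Inp n 1)))) k),
  (leaf_rproto _ _) => //; exact: leaf_rproto_valid.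
exists (\sum_(I : {set 'I_n} | #|I| == k) (1 : R)) => _ [C [w_ge0 w_sum1 _] <-].
apply: ler_sum => I _; apply: normr_fcoef_fiber_le1; first exact: balanced_XOR.
by move=> x y; rewrite -w_sum1; exact: normr_rval_le.
Qed.

Lemma L1k_le_sup_XOR d n k (C : rproto R (Inp n 1) (Inp n 1)) :
  rproto_valid C d -> L1k (fiber XORg (rval C)) k <= L1k_sup R XORg d n k.
Proof. by move=> C_valid; apply: sup_upper_bound (has_sup_L1k_XOR d n k) _ _; exists C. Qed.

Lemma L1k_sup_XOR_ge0 d n k : 0 <= L1k_sup R XORg d n k.
Proof.
apply: le_trans (@L1k_le_sup_XOR d n k _ (leaf_rproto_valid _ _ d)).
by apply: sumr_ge0 => I _; exact: normr_ge0.
Qed.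

Lemma L1k_fiber_le m1 m2 (g : gadget m1 m2) d n k (C : rproto R (Inp n m1) (Inp n m2)) :
  (forall S T, (S == finset.set0) || (T == finset.set0) -> gadget_coef R g S T = 0) ->
  rproto_valid C d ->
  L1k (fiber g (rval C)) k <= gadget_L1 R g ^+ k * L1k_sup R XORg d n k.
Proof.
move=> coef0 C_valid.
have bal_g : balanced R g by apply/balanced_coef0/coef0; rewrite eqxx.
have coef_le I : `|fcoef (fiber g (rval C)) I| <=
    gadget_L1 R g ^+ #|I| * \sum_c cweight R g c * `|block_coef (rval C) c I|.
  rewrite fcoef_fiber_mixture // mulr_sumr; apply: le_trans (ler_norm_sum _ _ _) _.
  by apply: ler_sum => c _; rewrite normrM normr_mixture_coef mulrA.
have block_le c : cweight R g c * \sum_(I : {set 'I_n} | #|I| == k) `|block_coef (rval C) c I| <=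
    cweight R g c * L1k_sup R XORg d n k.
  have [/forallP two_c | /forallPn [i one_sided]] := boolP [forall i, two_sided (c i)].
    rewrite ler_wpM2l ?cweight_ge0 //.
    under eq_bigr do rewrite -fcoef_fiber_XOR_sim //.
    exact: L1k_le_sup_XOR (sim_rproto_valid _ C_valid).
  by rewrite (cweight_eq0 coef0 one_sided) !mul0r.
apply: (@le_trans _ _ (gadget_L1 R g ^+ k *
    \sum_c cweight R g c * \sum_(I : {set 'I_n} | #|I| == k) `|block_coef (rval C) c I|)).
  have -> : \sum_c cweight R g c * \sum_(I : {set 'I_n} | #|I| == k) `|block_coef (rval C) c I| =
      \sum_(I : {set 'I_n} | #|I| == k) \sum_c cweight R g c * `|block_coef (rval C) c I|.
    by rewrite exchange_big; apply: eq_bigr => c _; rewrite mulr_sumr.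
  by rewrite mulr_sumr; apply: ler_sum => I /eqP <-; exact: coef_le.
rewrite ler_wpM2l ?exprn_ge0 ?gadget_L1_ge0 //.
apply: le_trans (ler_sum _ (fun c _ => block_le c)) _.
by rewrite -mulr_suml sum_cweight mul1r.
Qed.

End Supremum.

Theorem theorem7p6 (R : realType) (m1 m2 : nat) (g : gadget m1 m2) :
  (forall (S : {set 'I_m1}) (T : {set 'I_m2}),
      (S == finset.set0) || (T == finset.set0) -> gadget_coef R g S T = 0) ->
  forall k d n : nat,
    L1k_sup R g d n k <=
      (\sum_(S : {set 'I_m1}) \sum_(T : {set 'I_m2}) `|gadget_coef R g S T|) ^+ k
        * L1k_sup R XORg d n k
    /\
    (\sum_(S : {set 'I_m1}) \sum_(T : {set 'I_m2}) `|gadget_coef R g S T|) ^+ k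
        * L1k_sup R XORg d n k
      <= Num.sqrt (2 : R) ^+ ((m1 + m2) * k) * L1k_sup R XORg d n k.
Proof.
move=> coef0 k d n.
rewrite pair_bigA -/(gadget_L1 R g); split.
  apply: ge_sup; last by move=> _ [C C_valid <-]; exact: L1k_fiber_le.
  exists (L1k (fiber g (rval (leaf_rproto R (Inp n m1) (Inp n m2)))) k), (leaf_rproto R _ _) => //.
  exact: leaf_rproto_valid.
rewrite ler_wpM2r ?L1k_sup_XOR_ge0 // exprM.
by rewrite lerXn2r ?nnegrE ?exprn_ge0 ?sqrtr_ge0 ?gadget_L1_ge0 ?gadget_L1_le_sqrt2.
Qed.
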